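(* Let $V$ be a finite set of truth values and $\models_{\mathcal{D}_p,\mathcal{D}_c}$ a mixed consequence truth-relation on $V$, with a constant expressive semantics. Then it admits a G-conditional, and for every classical connective $C$ it admits a regular connective sharing a regularity rule with $C$.
   Context: $V$ contains distinct $1,0$; sets of designated values $\mathcal{D}$ satisfy $1\in\mathcal{D}$, $0\notin\mathcal{D}$; $\gamma\models_{\mathcal{D}_p,\mathcal{D}_c}\delta$ iff ($\gamma\subseteq\mathcal{D}_p\Rightarrow\delta\cap\mathcal{D}_c\neq\emptyset$). Semantics: valuations mapping atoms to $V$, each connective interpreted by a fixed truth function, extended compositionally, every assignment to finitely many distinct atoms realized; constant expressive: every value is the constant value of some formula. $\Gamma\vdash\Delta$ iff $v(\Gamma)\models v(\Delta)$ for all $v$; $\Gamma,A=\Gamma\cup\{A\}$. An $n$-ary connective $C$ is regular with rule $(\mathcal{B}^p,\mathcal{B}^c)$ ($\mathcal{B}^p,\mathcal{B}^c\subseteq\mathcal{P}(\{1..n\})^2$) if for all $\Gamma,\Delta,F_1..F_n$: $\Gamma,C(\vec F)\vdash\Delta$ iff for all $(B_p,B_c)\in\mathcal{B}^p$, $\Gamma\cup\{F_i:i\in B_p\}\vdash\{F_i:i\in B_c\}\cup\Delta$; $\Gamma\vdash C(\vec F),\Delta$ iff the same for all $(B_p,B_c)\in\mathcal{B}^c$. A classical connective is a truth function $\{0,1\}^n\to\{0,1\}$, regular in classical logic ($V=\{0,1\}$, relation $\models_{\{1\},\{1\}}$); two connectives share a regularity rule if some $(\mathcal{B}^p,\mathcal{B}^c)$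 is satisfied by both in their respective logics. ''Admits'' a connective: some truth function on $V$ interprets a connective with the property. A G-conditional satisfies $\Gamma\vdash A\to B,\Delta$ iff $\Gamma,A\vdash B,\Delta$, and $\Gamma,A\to B\vdash\Delta$ iff ($\Gamma\vdash A,\Delta$ and $\Gamma,B\vdash\Delta$). *)

From mathcomp Require Import all_boot.
Set Implicit Arguments. Unset Strict Implicit. Unset Printing Implicit Defensive.

Inductive form (K : Type) (ar : K -> nat) : Type :=
| Atom : nat -> form ar
| App : forall c : K, ('I_(ar c) -> form ar) -> form ar.
Arguments Atom {K ar}.
Arguments App {K ar}.

Definition interp (V K : Type) (ar : K -> nat) := forall c : K, ('I_(ar c) -> V) -> V.

Fixpoint eval (V K : Type) (ar : K -> nat) (I : interp V ar) (v : nat -> V)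
  (A : form ar) : V :=
  match A with
  | Atom n => v n
  | App c f => I c (fun i => eval I v (f i))
  end.

Definition cons (V : Type) (Dp Dc : pred V) (K : Type) (ar : K -> nat)
  (I : interp V ar) (Gamma Delta : form ar -> Prop) : Prop :=
  forall v : nat -> V,
    (forall A, Gamma A -> Dp (eval I v A)) ->
    exists B, Delta B /\ Dc (eval I v B).

Definition addf (T : Type) (G : T -> Prop) (A : T) : T -> Prop :=
  fun X => G X \/ X = A.
Definition unionf (T : Type) (G H : T -> Prop) : T -> Prop :=
  fun X => G X \/ H X.
Definition imgset (n : nat) (T : Type) (F : 'I_n -> T) (B : {set 'I_n}) : T -> Prop :=
  fun X => exists2 i, i \in B & X = F i.

Definition constant_expressive (V K : Type) (ar : K -> nat) (I : interp V ar) : Prop :=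
  forall x : V, exists A : form ar, forall v : nat -> V, eval I v A = x.

Definition regular (V : Type) (Dp Dc : pred V) (K : Type) (ar : K -> nat)
  (I : interp V ar) (c : K)
  (Bp Bc : {set ({set 'I_(ar c)} * {set 'I_(ar c)})}) : Prop :=
  forall (Gamma Delta : form ar -> Prop) (F : 'I_(ar c) -> form ar),
    (cons Dp Dc I (addf Gamma (App c F)) Delta <->
       (forall B, B \in Bp ->
          cons Dp Dc I (unionf Gamma (imgset F B.1)) (unionf (imgset F B.2) Delta)))
 /\ (cons Dp Dc I Gamma (addf Delta (App c F)) <->
       (forall B, B \in Bc ->
          cons Dp Dc I (unionf Gamma (imgset F B.1)) (unionf (imgset F B.2) Delta))).

Definition ext_ar (K : Type) (ar : K -> nat) (m : nat) : option K -> nat :=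
  fun o => match o with None => m | Some c => ar c end.

Definition ext_I (V K : Type) (ar : K -> nat) (I : interp V ar) (m : nat)
  (g : ('I_m -> V) -> V) : interp V (ext_ar ar m) :=
  fun o => match o return ('I_(ext_ar ar m o) -> V) -> V with
           | None => g
           | Some c => I c
           end.

(** Classical logic with the single n-ary connective f:
    V = bool, 1 = true, 0 = false, Dp = Dc = {1}. *)
Definition cl_ar (n : nat) : unit -> nat := fun _ => n.
Definition cl_I (n : nat) (f : ('I_n -> bool) -> bool) : interp bool (cl_ar n) :=
  fun _ => f.

Definition regular_classical (n : nat) (f : ('I_n -> bool) -> bool)
  (Bp Bc : {set ({set 'I_n} * {set 'I_n})}) : Prop :=
  @regular bool (pred1 true) (pred1 true) unit (cl_ar n) (cl_I f) tt Bp Bc.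

Definition classical_connective (n : nat) (f : ('I_n -> bool) -> bool) : Prop :=
  exists Bp Bc, regular_classical f Bp Bc.

Definition pair2 (T : Type) (A B : T) : 'I_2 -> T :=
  fun i => if val i == 0 then A else B.

Definition G_conditional (V : Type) (Dp Dc : pred V) (K : Type) (ar : K -> nat)
  (I : interp V ar) (g : ('I_2 -> V) -> V) : Prop :=
  let L := ext_I I g in
  let imp (A B : form (ext_ar ar 2)) : form (ext_ar ar 2) :=
      @App _ (ext_ar ar 2) None (pair2 A B) in
  forall (Gamma Delta : form (ext_ar ar 2) -> Prop) (A B : form (ext_ar ar 2)),
    (cons Dp Dc L Gamma (addf Delta (imp A B)) <->
       cons Dp Dc L (addf Gamma A) (addf Delta B))
 /\ (cons Dp Dc L (addf Gamma (imp A B)) Delta <->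
       (cons Dp Dc L Gamma (addf Delta A) /\ cons Dp Dc L (addf Gamma B) Delta)).

(** A truth function [g] realizes a rule (Bp, Bc) when [g w] is premise-designated
    exactly if the arguments [w] refute one of the atomic sequents of Bp, and
    conclusion-designated exactly if they refute none of Bc; the connective it
    interprets is then regular with that rule, valuation by valuation.
    Evaluating the regularity of a classical connective at the sequent whose only
    countermodel candidate is a given Boolean valuation shows that its rule is
    complementary: classically, Bp is refuted exactly when Bc is not.
    Complementarity is what makes the rule realizable in V.  When both sides (or
    neither) are refuted we need a value in Dp but not Dc (or in Dc but not Dp);
    if no argument is one, the Dp-pattern (or Dc-pattern) of the arguments is a
    Boolean valuation contradicting complementarity.  In the two remaining cases
    1 and 0 will do.  The G-conditional is the realizer of the rule of classical
    implication. *)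
From mathcomp Require Import all_boot.
From Stdlib Require Import Classical FunctionalExtensionality.
Set Implicit Arguments. Unset Strict Implicit. Unset Printing Implicit Defensive.

Section FiniteQuantifiers.
Variables (T : finType) (a b : T).

Lemma forall_in_set0 (P : pred T) : [forall x in set0, P x].
Proof. by apply/forall_inP => x; rewrite inE. Qed.

Lemma forall_in_set1 (P : pred T) : [forall x in [set a], P x] = P a.
Proof. by apply/forall_inP/idP => [/(_ a (set11 a)) // | Pa x /set1P->]. Qed.

Lemma exists_in_set1 (P : pred T) : [exists x in [set a], P x] = P a.
Proof. by apply/exists_inP/idP => [[x /set1P-> //] | Pa]; exists a; rewrite ?set11. Qed.

Lemma exists_in_set2 (P : pred T) : [exists x in [set a; b], P x] = P a || P b.
Proof.
apply/exists_inP/orP => [[x /set2P[]-> Px] | [Pa | Pb]]; [left | right | exists a | exists b] => //.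
  by rewrite set21.
by rewrite set22.
Qed.

Lemma forall_in_set1P (P : T -> Prop) : (forall x, x \in [set a] -> P x) <-> P a.
Proof. by split=> [/(_ a (set11 a)) | Pa x /set1P->]. Qed.

Lemma forall_in_set2P (P : T -> Prop) :
  (forall x, x \in [set a; b] -> P x) <-> P a /\ P b.
Proof. by split=> [H | [Pa Pb] x /set2P[]-> //]; split; apply: H; rewrite ?set21 ?set22. Qed.

End FiniteQuantifiers.

Section Refutation.
Variable n : nat.
Implicit Types (a b u : 'I_n -> bool) (B : {set 'I_n} * {set 'I_n})
  (S : {set ({set 'I_n} * {set 'I_n})}).

(* [a] and [b] mark the premise- and conclusion-designated arguments: [refutes B a b]
   says that the atomic sequent B.1 |- B.2 fails on them. *)
Definition refutes B a b := [forall i in B.1, a i] && [forall i in B.2, ~~ b i].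

Definition refutes_some S a b := [exists B in S, refutes B a b].

Definition complementary_rule S S' :=
  forall u, refutes_some S u u = ~~ refutes_some S' u u.

Lemma refutes_mono B a b a' b' :
  (forall i, a i -> a' i) -> (forall i, b' i -> b i) -> refutes B a b -> refutes B a' b'.
Proof.
move=> aa' b'b /andP[/forall_inP hB1 /forall_inP hB2].
apply/andP; split; apply/forall_inP => i iB; first exact/aa'/hB1.
by apply: contraNN (hB2 i iB); apply: b'b.
Qed.

Lemma refutes_some_mono S a b a' b' :
  (forall i, a i -> a' i) -> (forall i, b' i -> b i) ->
  refutes_some S a b -> refutes_some S a' b'.
Proof.
move=> aa' b'b /exists_inP[B BS hB].
by apply/exists_inP; exists B => //; apply: refutes_mono hB.
Qed.

Lemma eq_refutes B a b a' b' : a =1 a' -> b =1 b' -> refutes B a b = refutes B a' b'.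
Proof. by move=> ea eb; apply/idP/idP; apply: refutes_mono => i; rewrite ?ea ?eb. Qed.

Lemma forall_refutes_some (T : Type) S (a b : T -> 'I_n -> bool) (P : T -> Prop) :
  (forall t, refutes_some S (a t) (b t) -> P t) <->
  (forall B, B \in S -> forall t, refutes B (a t) (b t) -> P t).
Proof.
split=> [H B BS t hB | H t /exists_inP[B BS hB]]; last exact: H hB.
by apply: H; apply/exists_inP; exists B.
Qed.

End Refutation.

Section Sequents.
Variables (V : Type) (Dp Dc : pred V) (K : Type) (ar : K -> nat) (I : interp V ar).
Implicit Types (G D : form ar -> Prop) (A : form ar) (v : nat -> V).

Definition valid_at v G D :=
  (forall A, G A -> Dp (eval I v A)) -> exists B, D B /\ Dc (eval I v B).

Lemma valid_at_addl v G D A :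
  valid_at v (addf G A) D <-> (Dp (eval I v A) -> valid_at v G D).
Proof.
split=> [H pA pG | H pGA]; first by apply: H => X [/pG | ->].
by apply: H => [|X GX]; apply: pGA; [right | left].
Qed.

Lemma valid_at_addr v G D A :
  valid_at v G (addf D A) <-> (~~ Dc (eval I v A) -> valid_at v G D).
Proof.
split=> [H ncA /H[B [[DB | ->] cB]] | H pG]; first by exists B.
  by rewrite cB in ncA.
have [cA | /H/(_ pG)[B [DB cB]]] := boolP (Dc (eval I v A)).
  by exists A; split; first right.
by exists B; split; first left.
Qed.

Lemma valid_at_rule v G D c (F : 'I_(ar c) -> form ar)
    (B : {set 'I_(ar c)} * {set 'I_(ar c)}) :
  let w i := eval I v (F i) in
  valid_at v (unionf G (imgset F B.1)) (unionf (imgset F B.2) D) <->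
  (refutes B (Dp \o w) (Dc \o w) -> valid_at v G D).
Proof.
move=> w; split=> [H /andP[/forall_inP pB1 /forall_inP ncB2] pG | H pGB].
  have [X [[[i iB ->] | DX] cX]] : exists X, unionf (imgset F B.2) D X /\ Dc (eval I v X).
  - by apply: H => X [/pG // | [i iB ->]]; apply: pB1.
  - by case/negP: (ncB2 i iB).
  - by exists X.
have [/existsP[i /andP[iB cFi]] | /existsPn ncB2] := boolP [exists i, (i \in B.2) && Dc (w i)].
  by exists (F i); split; first by left; exists i.
have [|X [DX cX]] := H _ (fun X GX => pGB X (or_introl GX)); last by exists X; split; first right.
apply/andP; split; apply/forall_inP => i iB; first by apply: pGB; right; exists i.
by move: (ncB2 i); rewrite iB.
Qed.

Definition realizes (n : nat) (g : ('I_n -> V) -> V) (S S' : {set ({set 'I_n} * {set 'I_n})}) :=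
  forall w, Dp (g w) = refutes_some S (Dp \o w) (Dc \o w) /\
            Dc (g w) = ~~ refutes_some S' (Dp \o w) (Dc \o w).

Lemma regular_of_realizes c (Bp Bc : {set ({set 'I_(ar c)} * {set 'I_(ar c)})}) :
  realizes (@I c) Bp Bc -> @regular V Dp Dc K ar I c Bp Bc.
Proof.
move=> gE G D F; pose w v i := eval I v (F i).
have premisesE (S : {set ({set 'I_(ar c)} * {set 'I_(ar c)})}) :
  (forall B, B \in S ->
    cons Dp Dc I (unionf G (imgset F B.1)) (unionf (imgset F B.2) D)) <->
  forall v, refutes_some S (Dp \o w v) (Dc \o w v) -> valid_at v G D.
  rewrite forall_refutes_some.
  by split=> H B BS v; [apply/valid_at_rule/H | apply/valid_at_rule/H].
rewrite !premisesE; split; split=> H v.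
- by rewrite -(gE (w v)).1; apply: (valid_at_addl v G D (App c F)).1 (H v).
- by apply/(valid_at_addl v G D (App c F)); rewrite /= (gE (w v)).1; apply: H.
- rewrite -[refutes_some _ _ _]negbK -(gE (w v)).2.
  exact: (valid_at_addr v G D (App c F)).1 (H v).
- by apply/(valid_at_addr v G D (App c F)); rewrite /= (gE (w v)).2 negbK; apply: H.
Qed.

End Sequents.

Section Realizers.
Variables (V : choiceType) (Dp Dc : pred V) (n : nat) (one zero : V).
Hypotheses (Dp_one : Dp one) (Dc_one : Dc one) (Dp_zero : ~~ Dp zero) (Dc_zero : ~~ Dc zero).
Implicit Types (S : {set ({set 'I_n} * {set 'I_n})}) (w : 'I_n -> V).

Lemma exists_realizer S S' : complementary_rule S S' -> exists g, realizes Dp Dc g S S'.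
Proof.
move=> compl.
suff value w : exists x, (Dp x == refutes_some S (Dp \o w) (Dc \o w)) &&
                         (Dc x == ~~ refutes_some S' (Dp \o w) (Dc \o w)).
  exists (fun w => xchoose (value w)) => w.
  by have /andP[/eqP-> /eqP->] := xchooseP (value w).
case rS: (refutes_some S _ _); case rS': (refutes_some S' _ _).
- have [/existsP[i /andP[pi nci]] | /existsPn Dp_Dc] :=
    boolP [exists i, Dp (w i) && ~~ Dc (w i)].
    by exists (w i); rewrite pi (negbTE nci).
  have Dp_sub_Dc i : Dp (w i) -> Dc (w i) by move=> pi; move: (Dp_Dc i); rewrite pi negbK.
  have := compl (Dp \o w).
  by rewrite !(refutes_some_mono (fun _ => id) Dp_sub_Dc) ?rS ?rS'.
- by exists one; rewrite Dp_one Dc_one.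
- by exists zero; rewrite (negbTE Dp_zero) (negbTE Dc_zero).
- have [/existsP[i /andP[ci npi]] | /existsPn Dc_Dp] :=
    boolP [exists i, Dc (w i) && ~~ Dp (w i)].
    by exists (w i); rewrite ci (negbTE npi).
  have Dc_sub_Dp i : Dc (w i) -> Dp (w i) by move=> ci; move: (Dc_Dp i); rewrite ci negbK.
  have := compl (Dc \o w).
  have [rcS _ | _ /esym/negbFE rcS'] := boolP (refutes_some S (Dc \o w) (Dc \o w)).
    by rewrite (refutes_some_mono Dc_sub_Dp (fun _ => id) rcS) in rS.
  by rewrite (refutes_some_mono Dc_sub_Dp (fun _ => id) rcS') in rS'.
Qed.

End Realizers.

Lemma cons_pinned (K : Type) (ar : K -> nat) (I : interp bool ar) (v0 : nat -> bool)
    (G D : form ar -> Prop) :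
  (forall k, v0 k -> G (Atom k)) -> (forall k, ~~ v0 k -> D (Atom k)) ->
  cons (pred1 true) (pred1 true) I G D <-> valid_at (pred1 true) (pred1 true) I v0 G D.
Proof.
move=> v0G v0D; split=> [H | H v]; first exact: H.
have [-> // | /(contra_not (@functional_extensionality _ _ v v0))/not_all_ex_not[k vk] pG] :=
  classic (v = v0).
move: vk; case e: (v0 k) => vk.
  by case: vk; apply/eqP/(pG (Atom k))/v0G.
exists (Atom k); split; first by apply: v0D; rewrite e.
by rewrite /=; case: (v k) vk.
Qed.

Section ClassicalCharacteristicSequent.
Variables (n : nat) (f : ('I_n -> bool) -> bool) (u : 'I_n -> bool).

Let vu k := if insub k is Some i then u i else false.
Let F (i : 'I_(cl_ar n tt)) : form (cl_ar n) := Atom i.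
Let true_atoms (A : form (cl_ar n)) := exists2 k, vu k & A = Atom k.
Let false_atoms (A : form (cl_ar n)) := exists2 k, ~~ vu k & A = Atom k.
Local Notation ccons := (cons (pred1 true) (pred1 true) (cl_I f)).
Local Notation valid_vu := (valid_at (pred1 true) (pred1 true) (cl_I f) vu).

Let vuE (i : 'I_n) : vu i = u i.
Proof. by rewrite /vu valK. Qed.

Let ccons_vu G D : (forall A, true_atoms A -> G A) -> (forall A, false_atoms A -> D A) ->
  ccons G D <-> valid_vu G D.
Proof. by move=> tG fD; apply: cons_pinned => k hk; [apply: tG | apply: fD]; exists k. Qed.

Let countermodel_vu (b : bool) : (b -> valid_vu true_atoms false_atoms) <-> ~~ b.
Proof.
have premises_hold A : true_atoms A -> pred1 true (eval (cl_I f) vu A).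
  by case=> k vk ->; rewrite /= vk.
split=> [H | /negbTE-> //]; apply/negP => /H/(_ premises_hold)[B [[k nk ->]]].
by rewrite /= (negbTE nk).
Qed.

Let premise_sequentE (B : {set 'I_n} * {set 'I_n}) :
  ccons (unionf true_atoms (imgset F B.1)) (unionf (imgset F B.2) false_atoms) <->
  ~~ refutes B u u.
Proof.
rewrite ccons_vu => [|A|A]; [ | by left | by right].
rewrite valid_at_rule -countermodel_vu.
by rewrite (@eq_refutes _ B _ _ u u) // => i /=; rewrite vuE eqb_id.
Qed.

Let f_vu : eval (cl_I f) vu (App tt F) = f u.
Proof. by congr f; apply: functional_extensionality => i; apply: vuE. Qed.

Let left_sequentE : ccons (addf true_atoms (App tt F)) false_atoms <-> ~~ f u.
Proof.
rewrite ccons_vu => [|A|A]; [ | by left | by []].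
by rewrite valid_at_addl f_vu countermodel_vu /= eqb_id.
Qed.

Let right_sequentE : ccons true_atoms (addf false_atoms (App tt F)) <-> f u.
Proof.
rewrite ccons_vu => [|A|A]; [ | by [] | by left].
by rewrite valid_at_addr f_vu countermodel_vu /= negbK eqb_id.
Qed.

Lemma regular_classicalE Bp Bc :
  regular_classical f Bp Bc -> f u = refutes_some Bp u u /\ f u = ~~ refutes_some Bc u u.
Proof.
move=> /(_ true_atoms false_atoms F)[regl regr]; rewrite /refutes_some; split.
- apply/negb_inj; apply/idP/exists_inPn => [/left_sequentE/regl H B /H/premise_sequentE // | H].
  by apply/left_sequentE/regl => B /H/premise_sequentE.
- apply/idP/exists_inPn => [/right_sequentE/regr H B /H/premise_sequentE // | H].
  by apply/right_sequentE/regr => B /H/premise_sequentE.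
Qed.

End ClassicalCharacteristicSequent.

Definition imp_Bp : {set ({set 'I_2} * {set 'I_2})} :=
  [set (set0, [set ord0]); ([set ord_max], set0)].
Definition imp_Bc : {set ({set 'I_2} * {set 'I_2})} := [set ([set ord0], [set ord_max])].

Lemma imp_rule_complementary : complementary_rule imp_Bp imp_Bc.
Proof.
move=> u; rewrite /refutes_some exists_in_set1 exists_in_set2 /refutes /=.
by rewrite !forall_in_set1 !forall_in_set0; case: (u ord0); case: (u ord_max).
Qed.

Lemma cons_weaken (V : Type) (Dp Dc : pred V) (K : Type) (ar : K -> nat) (I : interp V ar)
    (G G' D D' : form ar -> Prop) :
  (forall X, G X -> G' X) -> (forall X, D X -> D' X) ->
  cons Dp Dc I G D -> cons Dp Dc I G' D'.
Proof.
move=> GG' DD' H v pG'.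
by have [X [/DD' DX cX]] := H v (fun X GX => pG' X (GG' X GX)); exists X.
Qed.

Section ImageSets.
Variables (n : nat) (T : Type) (F : 'I_n -> T) (X : T).

Lemma imgset0 : ~ imgset F set0 X.
Proof. by case=> i; rewrite inE. Qed.

Lemma imgset1 i : imgset F [set i] X <-> X = F i.
Proof. by split=> [[j /set1P->] | ->]; last exists i; rewrite ?set11. Qed.

End ImageSets.

Lemma G_conditional_of_regular (V : Type) (Dp Dc : pred V) (K : Type) (ar : K -> nat)
    (I : interp V ar) (g : ('I_2 -> V) -> V) :
  @regular V Dp Dc _ _ (ext_I I g) None imp_Bp imp_Bc -> G_conditional Dp Dc I g.
Proof.
rewrite /G_conditional /= => reg G D A B; have [regl regr] := reg G D (pair2 A B).
have img0 := @imgset0 _ _ (pair2 A B).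
split.
- rewrite regr forall_in_set1P.
  by split; apply: cons_weaken => X; rewrite /unionf /addf imgset1 /=; tauto.
- rewrite regl forall_in_set2P /=.
  split=> [] [H1 H2]; split; [move: H1 | move: H2 | move: H1 | move: H2];
    by apply: cons_weaken => X; rewrite /unionf /addf ?imgset1 /=; have := img0 X; tauto.
Qed.

Theorem theorem6p1 (V : finType) (one zero : V) (Dp Dc : {set V})
  (K : Type) (ar : K -> nat) (I : interp V ar) :
  one != zero ->
  one \in Dp -> zero \notin Dp -> one \in Dc -> zero \notin Dc ->
  constant_expressive I ->
  (exists g : ('I_2 -> V) -> V, G_conditional (mem Dp) (mem Dc) I g) /\
  (forall (n : nat) (f : ('I_n -> bool) -> bool), classical_connective f ->
     exists (g : ('I_n -> V) -> V) (Bp Bc : {set ({set 'I_n} * {set 'I_n})}),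
       regular_classical f Bp Bc /\
       @regular V (mem Dp) (mem Dc) (option K) (ext_ar ar n) (ext_I I g) None Bp Bc).
Proof.
(* New truth functions are arbitrary. *)
move=> _ Dp_one Dp_zero Dc_one Dc_zero _.
have realizer n := @exists_realizer V (mem Dp) (mem Dc) n one zero Dp_one Dc_one Dp_zero Dc_zero.
split.
  have [g gE] := realizer 2 _ _ imp_rule_complementary.
  by exists g; apply/G_conditional_of_regular/regular_of_realizes.
move=> n f [Bp [Bc reg]].
have [g gE] : exists g, realizes (mem Dp) (mem Dc) g Bp Bc.
  by apply: realizer => u; case: (regular_classicalE u reg) => <-.
by exists g, Bp, Bc; split; last exact: regular_of_realizes.
Qed.
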